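(* Let $G=K(n_1,\dots,n_s)$ be a complete $s$-partite graph ($s\ge 2$) with parts $V_1,\dots,V_s$, $|V_j|=n_j$, $n_1\ge n_2\ge\cdots\ge n_s$, such that $3\le n_1\le 5$ and $n_2=2$. Then there is an optimal $3$-relaxed coloring of $G$ which assigns the same color to three vertices of $V_1$ and both vertices of $V_2$.
   Context: A map $f$ from $V(G)$ to a finite set of colors is a $3$-relaxed coloring if every vertex $u$ has at most $3$ neighbors $v$ with $f(v)=f(u)$; it is optimal if it uses the minimum possible number $\chi_3(G)$ of colors. *)

From mathcomp Require Import all_boot.
Set Implicit Arguments. Unset Strict Implicit. Unset Printing Implicit Defensive.

(* Parts are indexed from 0, so the paper's V_1 is part 0 and V_2 is part 1. *)
Definition kpart_vertex (s : nat) (n : nat -> nat) : finType :=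
  {j : 'I_s & 'I_(n j)}.

Definition part (s : nat) (n : nat -> nat) (v : kpart_vertex s n) : nat :=
  val (tag v).

Definition kpart_adj (s : nat) (n : nat -> nat) : rel (kpart_vertex s n) :=
  fun u v => tag u != tag v.

Definition relaxed3 (T : finType) (e : rel T) (C : finType) (f : T -> C) :=
  forall u : T, #|[set v | e u v && (f v == f u)]| <= 3.

(* f is an optimal 3-relaxed coloring: it is 3-relaxed and the number of
   colours it uses is at most the number of colours used by any 3-relaxed
   coloring (any finite colour set can be injected into some 'I_m). *)
Definition optimal_relaxed3 (T : finType) (e : rel T) (C : finType)
    (f : T -> C) :=
  relaxed3 e f /\
  forall (m : nat) (g : T -> 'I_m), relaxed3 e g -> #|f @: T| <= #|g @: T|.

(* In a 3-relaxed coloring of a complete multipartite graph a vertex is adjacent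
   to every vertex of its color outside its own part, so a color class has at
   most three vertices outside the part of any of its members.  All parts but
   V_1 have at most two vertices, hence every class has at most five vertices,
   and a class with five vertices has at least three of them in V_1: otherwise
   every part would meet it in exactly two vertices and five would be even.  As
   |V_1| <= 5, at most one class has five vertices, so N vertices need at least
   (N - 1) / 4 colors.  Coloring three vertices of V_1 together with V_2 alike
   and the other N - 5 vertices in groups of four attains this bound. *)

From mathcomp Require Import all_boot zify.
Set Implicit Arguments.
Unset Strict Implicit.
Unset Printing Implicit Defensive.

Definition fibre (T I : finType) (h : T -> I) (i : I) : {set T} :=
  [set x | h x == i].

Lemma sum_card_fibres (T I : finType) (h : T -> I) (A : {set T}) (K : {set I}) :
  h @: A \subset K -> \sum_(i in K) #|A :&: fibre h i| = #|A|.
Proof.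
move=> sAK; rewrite -sum1_card (partition_big h (mem K)) /=; last first.
  by move=> x xA; apply: (subsetP sAK); apply: imset_f.
by apply: eq_bigr => i _; rewrite -sum1_card; apply: eq_bigl => x; rewrite !inE.
Qed.

Lemma exists_block_coloring (T : finType) (A : {set T}) (b : nat) : 0 < b ->
  exists f : T -> 'I_((#|~: A| + b.-1) %/ b).+1,
    (forall x, (f x == ord0) = (x \in A)) /\
    (forall x, x \notin A -> #|fibre f (f x)| <= b).
Proof.
move=> b_gt0; pose idx x := index x (enum (~: A)).
have idx_lt x : x \notin A -> idx x %/ b < (#|~: A| + b.-1) %/ b.
  move=> xA; have : idx x < #|~: A| by rewrite cardE index_mem mem_enum inE.
  rewrite leq_divRL // mulSn; have := leq_divM (idx x) b.
  set q := idx x %/ b * b; lia.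
pose f x : 'I_((#|~: A| + b.-1) %/ b).+1 :=
  if x \in A then ord0 else inord (idx x %/ b).+1.
have f_in x : x \in A -> val (f x) = 0 by rewrite /f => ->.
have f_out x : x \notin A -> val (f x) = (idx x %/ b).+1.
  by move=> xA; rewrite /f (negbTE xA) /= inordK // ltnS idx_lt.
clearbody f; exists f; split=> [x | x xA].
  rewrite -val_eqE /=; case: (boolP (x \in A)) => xA; first by rewrite f_in.
  by rewrite f_out // (negbTE xA).
pose block := [set y | (y \notin A) && (idx y %/ b == idx x %/ b)].
have sub : fibre f (f x) \subset block.
  apply/subsetP => y; rewrite !inE => /eqP/(congr1 val); rewrite (f_out x xA).
  case: (boolP (y \in A)) => yA; first by rewrite f_in.
  by rewrite f_out // => -[/eqP].
pose r y : 'I_b := Ordinal (ltn_pmod (idx y) b_gt0).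
have r_inj : {in block &, injective r}.
  move=> y z; rewrite !inE => /andP[yA /eqP qy] /andP[zA /eqP qz].
  move/(congr1 val) => /= ryz.
  apply: (@index_inj _ y (enum (~: A))); rewrite ?mem_enum ?inE //.
  by rewrite [LHS](divn_eq _ b) [RHS](divn_eq _ b) qy qz ryz.
rewrite (leq_trans (subset_leq_card sub)) // -(card_in_imset r_inj).
by rewrite (leq_trans (max_card _)) ?card_ord.
Qed.

Section Multipartite.
Variables (s : nat) (n : nat -> nat).
Local Notation V := (kpart_vertex s n).

Definition kpart (j : 'I_s) : {set V} := fibre (fun v : V => tag v) j.

Lemma card_kpart (j : 'I_s) : #|kpart j| = n j.
Proof.
have -> : kpart j = [set Tagged (fun j : 'I_s => 'I_(n j)) i | i : 'I_(n j)].
  apply/setP => -[j' i]; rewrite /kpart !inE.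
  by apply/eqP/imsetP => [/= ej | [i' _ /(congr1 tag)] //]; subst j'; exists i.
rewrite card_in_imset ?cardsT ?card_ord // => i1 i2 _ _.
by move/(congr1 (fun v : V => val (tagged v)))/val_inj.
Qed.

Lemma kpart_same_color_nbhd (C : finType) (g : V -> C) (u : V) :
  [set v | kpart_adj u v && (g v == g u)] = fibre g (g u) :\: kpart (tag u).
Proof. by apply/setP => v; rewrite /kpart !inE /kpart_adj eq_sym andbC. Qed.

Lemma card_kpart_setI (A : {set V}) (j : 'I_s) : #|A :&: kpart j| <= n j.
Proof. by rewrite -card_kpart subset_leq_card ?subsetIr. Qed.

Section LowerBound.
Variables (C : finType) (g : V -> C).
Hypothesis g_relaxed : relaxed3 (@kpart_adj s n) g.

Lemma card_fibre_le_block (u : V) :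
  #|fibre g (g u)| <= #|fibre g (g u) :&: kpart (tag u)| + 3.
Proof.
have := g_relaxed u; rewrite kpart_same_color_nbhd cardsD.
have : #|fibre g (g u) :&: kpart (tag u)| <= #|fibre g (g u)|.
  by rewrite subset_leq_card ?subsetIl.
lia.
Qed.

Lemma card_fibre_small_blocks (c : C) :
  (forall u, u \in fibre g c -> #|fibre g c :&: kpart (tag u)| <= 2) ->
  #|fibre g c| <= 4.
Proof.
move=> small; rewrite leqNgt; apply/negP => big.
have block2 u : u \in fibre g c -> #|fibre g c :&: kpart (tag u)| = 2.
  move=> uc; have := card_fibre_le_block u; have := small u uc.
  by rewrite inE in uc; rewrite (eqP uc); lia.
have even : #|fibre g c| = #|[set tag v | v in fibre g c]| * 2.
  rewrite -(sum_card_fibres (h := fun v : V => tag v) (subxx _)) -sum_nat_const.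
  by apply: eq_bigr => _ /imsetP[u uc ->]; exact: block2.
have [u uc] : exists u, u \in fibre g c by apply/set0Pn; rewrite -card_gt0; lia.
have := card_fibre_le_block u; have := block2 u uc; rewrite inE in uc.
by rewrite (eqP uc); lia.
Qed.

Variable j0 : 'I_s.
Hypothesis small_parts : forall j, j != j0 -> n j <= 2.
Hypothesis big_part : n j0 <= 5.

Lemma card_fibre_le5 (c : C) : #|fibre g c| <= 5.
Proof.
case: (boolP [exists u in fibre g c, tag u != j0]).
  case/exists_inP => u uc tu.
  have := card_fibre_le_block u; have := card_kpart_setI (fibre g c) (tag u).
  by have := small_parts tu; rewrite inE in uc; rewrite (eqP uc); lia.
move=> /exists_inPn in_j0; apply: leq_trans big_part.
rewrite -card_kpart subset_leq_card //; apply/subsetP => u uc.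
by have := in_j0 u uc; rewrite negbK /kpart inE.
Qed.

Lemma card_fibre_le (c : C) :
  #|fibre g c| <= 4 + (2 < #|kpart j0 :&: fibre g c|).
Proof.
case: (ltnP 2 #|kpart j0 :&: fibre g c|) => [_ | few].
  by have := card_fibre_le5 c; lia.
rewrite addn0; apply: card_fibre_small_blocks => u _.
case: (eqVneq (tag u) j0) => [-> | tu]; first by rewrite setIC.
by have := card_kpart_setI (fibre g c) (tag u); have := small_parts tu; lia.
Qed.

Lemma card_kpart_vertex_le : #|V| <= 4 * #|g @: V| + 1.
Proof.
have sub (A : {set V}) : g @: A \subset g @: V.
  by apply/subsetP => _ /imsetP[x _ ->]; apply: imset_f.
have cover : #|V| = \sum_(c in g @: V) #|fibre g c|.
  rewrite -cardsT -(sum_card_fibres (sub _)).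
  by apply: eq_bigr => c _; rewrite setTI.
have meet_j0 : \sum_(c in g @: V) (2 < #|kpart j0 :&: fibre g c|) <= 1.
  suff : 3 * \sum_(c in g @: V) (2 < #|kpart j0 :&: fibre g c|) <= 5 by lia.
  rewrite big_distrr /=; apply: leq_trans big_part; rewrite -card_kpart.
  rewrite -(sum_card_fibres (sub _)) leq_sum // => c _.
  by case: ltnP.
rewrite cover (leq_trans (leq_sum _ (fun c _ => card_fibre_le c))) //.
by rewrite big_split sum_nat_const /= mulnC leq_add2l.
Qed.

End LowerBound.

Lemma card_setD_kpart_lt (A : {set V}) (u : V) :
  u \in A -> #|A :\: kpart (tag u)| < #|A|.
Proof.
move=> uA; rewrite cardsD; have : 0 < #|A :&: kpart (tag u)|.
  by apply/card_gt0P; exists u; rewrite /kpart !inE uA eqxx.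
have : #|A :&: kpart (tag u)| <= #|A| by rewrite subset_leq_card ?subsetIl.
lia.
Qed.

Lemma card_setD_kpart_pair (X : {set V}) (j0 j1 : 'I_s) (u : V) :
  X \subset kpart j0 -> #|X| <= 3 -> n j1 <= 3 -> u \in X :|: kpart j1 ->
  #|(X :|: kpart j1) :\: kpart (tag u)| <= 3.
Proof.
move=> Xj0 X3 n_j1; case/setUP => [uX | uj1].
  have /eqP -> : tag u == j0 by have := subsetP Xj0 u uX; rewrite inE.
  rewrite (leq_trans _ n_j1) // -card_kpart subset_leq_card //.
  apply/subsetP => v; rewrite !inE; case/andP => vj0 /orP[vX|//].
  by have := subsetP Xj0 v vX; rewrite inE (negbTE vj0).
have /eqP -> : tag u == j1 by move: uj1; rewrite inE.
rewrite (leq_trans _ X3) // subset_leq_card //.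
by apply/subsetP => v; rewrite !inE; case/andP => /negbTE vj1; rewrite vj1 orbF.
Qed.

Lemma card_setU_kpart (X : {set V}) (j0 j1 : 'I_s) :
  X \subset kpart j0 -> j0 != j1 -> #|X :|: kpart j1| = #|X| + n j1.
Proof.
move=> Xj0 j01; rewrite cardsU card_kpart.
suff -> : X :&: kpart j1 = set0 by rewrite cards0 subn0.
apply/setP => v; rewrite inE [_ \in set0]inE; apply/negbTE/andP.
by case=> /(subsetP Xj0); rewrite !inE => /eqP ->; rewrite (negbTE j01).
Qed.

Lemma relaxed3_pair_block (C : finType) (f : V -> C) (X : {set V})
    (j0 j1 : 'I_s) :
  X \subset kpart j0 -> #|X| <= 3 -> n j1 <= 3 ->
  (forall u, u \in X :|: kpart j1 -> fibre f (f u) = X :|: kpart j1) ->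
  (forall u, u \notin X :|: kpart j1 -> #|fibre f (f u)| <= 4) ->
  relaxed3 (@kpart_adj s n) f.
Proof.
move=> Xj0 X3 n_j1 f_block f_small u; rewrite kpart_same_color_nbhd.
case: (boolP (u \in X :|: kpart j1)) => uA.
  by rewrite f_block // (card_setD_kpart_pair Xj0).
have := f_small u uA; have := @card_setD_kpart_lt (fibre f (f u)) u.
by rewrite inE eqxx; lia.
Qed.

End Multipartite.

Theorem lemma5p4 (s : nat) (n : nat -> nat) :
  2 <= s ->
  (forall j, j < s -> 0 < n j) ->
  (forall i j, i <= j -> j < s -> n j <= n i) ->
  3 <= n 0 <= 5 ->
  n 1 = 2 ->
  exists (k : nat) (f : kpart_vertex s n -> 'I_k),
    optimal_relaxed3 (@kpart_adj s n) f /\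
    exists u1 u2 u3 : kpart_vertex s n,
      [/\ part u1 = 0, part u2 = 0 & part u3 = 0] /\
      uniq [:: u1; u2; u3] /\
      f u1 = f u2 /\ f u2 = f u3 /\
      (forall v : kpart_vertex s n, part v = 1 -> f v = f u1).
Proof.
move=> s_ge2 _ n_mono /andP[n0_ge3 n0_le5] n1.
pose j0 : 'I_s := Ordinal (ltnW s_ge2); pose j1 : 'I_s := Ordinal s_ge2.
have small_parts (j : 'I_s) : j != j0 -> n j <= 2.
  move=> jj0; rewrite -n1 n_mono // lt0n.
  by apply: contraNneq jj0 => j_eq0; apply/eqP/val_inj.
have /card_geqP[t [uniq_u size_t u_j0]] : 3 <= #|kpart n j0|.
  by rewrite card_kpart.
case: t size_t uniq_u u_j0 => [|u1 [|u2 [|u3 [|? ?]]]] // _ uniq_u u_j0.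
pose X := [set v in [:: u1; u2; u3]]; pose A := X :|: kpart n j1.
have X_j0 : X \subset kpart n j0.
  by apply/subsetP => v; rewrite inE; apply: u_j0.
have card_X : #|X| = 3 by rewrite cardsE; apply/card_uniqP.
have card_A : #|A| = 5 by rewrite (card_setU_kpart X_j0) ?card_X ?n1.
have [f [f_A f_small]] := exists_block_coloring A (isT : 0 < 4).
have f0 v : v \in A -> f v = ord0 by move=> vA; apply/eqP; rewrite f_A.
exists _, f; split; last first.
  have part0 v : v \in [:: u1; u2; u3] -> part v = 0.
    by move/u_j0; rewrite inE /part => /eqP ->.
  have uA v : v \in [:: u1; u2; u3] -> v \in A.
    by move=> v_u; rewrite inE [_ \in X]inE v_u.
  exists u1, u2, u3; rewrite !part0 ?f0 ?uA ?inE ?eqxx ?orbT //.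
  do 4 (split; first by []).
  move=> v v1; have v_j1 : tag v = j1 by apply: val_inj.
  by rewrite f0 // !inE v_j1 eqxx orbT.
split.
  apply: (relaxed3_pair_block (j1 := j1) X_j0); rewrite ?card_X ?n1 // => u uA.
  by apply/setP => v; rewrite inE (f0 u uA) f_A.
move=> m g g_relaxed; have := card_kpart_vertex_le g_relaxed small_parts n0_le5.
have : #|f @: kpart_vertex s n| <= ((#|~: A| + 3) %/ 4).+1.
  by rewrite (leq_trans (max_card _)) ?card_ord.
have : 0 < #|g @: kpart_vertex s n|.
  by rewrite card_gt0; apply/set0Pn; exists (g u1); apply: imset_f.
have := cardsC A; rewrite card_A; lia.
Qed.
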